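(* Let $\mathfrak{R}=(G,G',S,\phi,\rho,\delta)$ be an optimal reconciliation. Then $\Delta(\mathfrak{R})\subseteq V(G)$.
   Context: All trees are rooted binary trees whose root node has degree 1; every other non-leaf node $x$ has exactly two children $x_l,x_r$. $G$ is a gene tree, $S$ a species tree, $\phi:L(G)\to L(S)$. A tree $G'$ is an extension of $G$ if $G$ is obtained from $G'$ by pruning some subtrees and suppressing degree-2 nodes; $V(G)\subseteq V(G')$. A map $\rho:V(G')\to V(S)$ is consistent with $S$ if $\rho(root(G'))=root(S)$ and every node $x$ of $G'$ with two children satisfies (D) $\rho(x)=\rho(x_l)=\rho(x_r)$ or (S) $\rho(x)_l=\rho(x_l)$ and $\rho(x)_r=\rho(x_r)$. A reconciliation $\mathfrak{R}=(G,G',S,\phi,\rho,\delta)$ consists of an extension $G'$ of $G$, a consistent $\rho$ with $\rho|_{L(G)}=\phi$, and an injective partial function $\delta:\Delta\to\Lambda$ with $\rho(x)=\rho(\delta(x))$, where $\Delta=\Delta(\mathfrak{R})$ (duplications) is the set of nodes with two children satisfying (D) and $\Lambda=L(G')\setminus L(G)$ (losses); $\Delta'$ is the domain and $\Lambda'$ the image of $\delta$. Cost $\omega(\mathfrak{R})=|\Lambda\setminus\Lambda'|+|\Delta\setminus\Delta'|+|\Delta'|$; $\mathfrak{R}$ is optimal if it minimizes $\omega$ among all reconciliations for the given $G,S,\phi$. *)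

From mathcomp Require Import all_boot.
Set Implicit Arguments. Unset Strict Implicit. Unset Printing Implicit Defensive.

(* Ordered binary trees with labelled nodes (labels = node identities). *)
Inductive btree (A : Type) : Type :=
| Leaf of A
| Node of A & btree A & btree A.
Arguments Leaf {A}. Arguments Node {A}.

(* A rooted binary tree whose root has degree 1 ("planted"):
   the root [proot] has the single child [label pbody]. *)
Record ptree (A : Type) := Planted { proot : A; pbody : btree A }.
Arguments Planted {A}.

Section Trees.
Variable A : eqType.

Definition label (t : btree A) : A := match t with Leaf a => a | Node a _ _ => a end.

Fixpoint nodes (t : btree A) : seq A :=
  match t with Leaf a => [:: a] | Node a l r => a :: nodes l ++ nodes r end.

Fixpoint leaves (t : btree A) : seq A :=
  match t with Leaf a => [:: a] | Node _ l r => leaves l ++ leaves r end.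

Fixpoint inner (t : btree A) : seq A :=
  match t with Leaf _ => [::] | Node a l r => a :: inner l ++ inner r end.

Fixpoint kids (t : btree A) (x : A) : option (A * A) :=
  match t with
  | Leaf _ => None
  | Node a l r =>
      if a == x then Some (label l, label r)
      else match kids l x with Some p => Some p | None => kids r x end
  end.

Definition nodesP (T : ptree A) := proot T :: nodes (pbody T).
Definition leavesP (T : ptree A) := leaves (pbody T).
Definition innerP (T : ptree A) := inner (pbody T).
Definition kidsP (T : ptree A) (x : A) := kids (pbody T) x.

Definition wf_tree (T : ptree A) : bool := uniq (nodesP T).

(* Restriction to the leaves satisfying [keep]: prune all subtrees without
   kept leaves and suppress the resulting degree-2 nodes (a node left with a
   single child disappears, its child being attached to its parent). *)
Fixpoint restr (keep : pred A) (t : btree A) : option (btree A) :=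
  match t with
  | Leaf a => if keep a then Some (Leaf a) else None
  | Node a l r =>
      match restr keep l, restr keep r with
      | Some l', Some r' => Some (Node a l' r')
      | Some l', None => Some l'
      | None, Some r' => Some r'
      | None, None => None
      end
  end.

Definition restrP (keep : pred A) (T : ptree A) : option (ptree A) :=
  match restr keep (pbody T) with
  | Some t => Some (Planted (proot T) t)
  | None => None
  end.

(* G' is an extension of G: G is obtained from G' by pruning subtrees and
   suppressing degree-2 nodes (node identities preserved). *)
Definition extension (G' G : ptree A) : Prop :=
  wf_tree G' /\ exists keep : pred A, restrP keep G' = Some G.

End Trees.

Section Reconciliation.
Variable B : eqType.
(* gene-tree node identities are natural numbers (an unbounded supply of names) *)

Definition is_dup (G' : ptree nat) (rho : nat -> B) (x : nat) : bool :=
  match kidsP G' x with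
  | Some (xl, xr) => (rho x == rho xl) && (rho x == rho xr)
  | None => false
  end.

Definition is_spec (G' : ptree nat) (S : ptree B) (rho : nat -> B) (x : nat) : bool :=
  match kidsP G' x, kidsP S (rho x) with
  | Some (xl, xr), Some (sl, sr) => (sl == rho xl) && (sr == rho xr)
  | _, _ => false
  end.

Definition consistent (G' : ptree nat) (S : ptree B) (rho : nat -> B) : Prop :=
  rho (proot G') = proot S /\
  (forall x, x \in nodesP G' -> rho x \in nodesP S) /\
  (forall x, x \in innerP G' -> is_dup G' rho x || is_spec G' S rho x).

Definition Dup (G' : ptree nat) (rho : nat -> B) : seq nat := [seq x <- innerP G' | is_dup G' rho x].
Definition Loss (G G' : ptree nat) : seq nat := [seq y <- leavesP G' | y \notin leavesP G].
Definition Dup' (G' : ptree nat) (rho : nat -> B) (delta : nat -> option nat) : seq nat := [seq x <- Dup G' rho | delta x != None].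
Definition Loss' (G' : ptree nat) (rho : nat -> B) (delta : nat -> option nat) : seq nat := pmap delta (Dup' G' rho delta).

Definition is_reconciliation (G G' : ptree nat) (S : ptree B) (phi rho : nat -> B)
    (delta : nat -> option nat) : Prop :=
  extension G' G /\
  consistent G' S rho /\
  (forall x, x \in leavesP G -> rho x = phi x) /\
  (forall x y, x \in Dup G' rho -> delta x = Some y ->
      y \in Loss G G' /\ rho x = rho y) /\
  (forall x1 x2 y, x1 \in Dup G' rho -> x2 \in Dup G' rho ->
      delta x1 = Some y -> delta x2 = Some y -> x1 = x2).

Definition cost (G G' : ptree nat) (rho : nat -> B) (delta : nat -> option nat) : nat :=
  count (fun y => y \notin Loss' G' rho delta) (Loss G G')
  + count (fun x => delta x == None) (Dup G' rho)
  + size (Dup' G' rho delta).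

Definition optimal (G G' : ptree nat) (S : ptree B) (phi rho : nat -> B)
    (delta : nat -> option nat) : Prop :=
  is_reconciliation G G' S phi rho delta /\
  forall G'2 rho2 delta2, is_reconciliation G G'2 S phi rho2 delta2 ->
    cost G G' rho delta <= cost G G'2 rho2 delta2.

End Reconciliation.

(* Let x be a duplication of G' that is not a node of G, and write
   cost = |Lambda| + |Delta| - |Delta'|.  Since x is suppressed when G' is
   restricted to G, one child subtree o of x keeps no leaf of G, so all its
   leaves are losses; and since x is a duplication, x and both its children
   are mapped to the same species.  Hence x together with o can be cut out,
   the other child k taking the place of x: rho stays consistent and the
   result is still an extension of G.
   - If delta x is undefined or a leaf of o, the cut saves the duplication x
     and the losses of o, while the only pairs of delta that break are those
     of duplications of o and those whose loss lies in o (at most |leaves o|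
     of them, by injectivity, x's own pair included): the cost drops.
   - If delta x = y is a loss outside o, then y lies in the new tree and has
     the species of x; grafting o in place of the leaf y removes exactly x,
     y and the pair (x, y), and the cost drops by one.
   Either way optimality is contradicted. *)

From mathcomp Require Import all_boot zify.
Set Implicit Arguments. Unset Strict Implicit. Unset Printing Implicit Defensive.

Section Counting.
Variable T : eqType.
Implicit Types (s t : seq T) (a b p : pred T).

Lemma count_predI_split a b s :
  count a s = count (predI a b) s + count (predI a (predC b)) s.
Proof. by elim: s => //= z s ->; case: (a z); case: (b z) => /=; lia. Qed.

Lemma count_uniq_sub p s t : uniq s -> uniq t -> {subset t <= s} ->
  count p s = count p t + count (predI p (predC (mem t))) s.
Proof.
move=> us ut ts; rewrite (count_predI_split p (mem t)); congr (_ + _).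
rewrite -count_filter; apply/(permP _)/uniq_perm; rewrite ?filter_uniq //.
by move=> z; rewrite mem_filter andb_idr //; apply: ts.
Qed.

Lemma size_uniq_sub s t : uniq s -> uniq t -> {subset t <= s} ->
  size s = size t + count (predC (mem t)) s.
Proof. by move=> us ut ts; rewrite -!count_predT (count_uniq_sub predT us ut ts). Qed.

Lemma count_lt_sub a b s x : subpred a b -> x \in s -> b x -> ~~ a x ->
  count a s < count b s.
Proof.
move=> ab + bx nax; elim: s => //= z s IH; rewrite in_cons => /orP[/eqP<-|/IH].
  by rewrite (negbTE nax) bx ltnS sub_count.
by case az: (a z); rewrite ?(ab _ az) /=; lia.
Qed.

End Counting.

Lemma uniq_pmap_in (T U : eqType) (f : T -> option U) s : uniq s ->
  (forall x1 x2 y, x1 \in s -> x2 \in s -> f x1 = Some y -> f x2 = Some y -> x1 = x2) ->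
  uniq (pmap f s).
Proof.
elim: s => //= z s IH /andP[zs us] inj.
have inj_s : forall x1 x2 y, x1 \in s -> x2 \in s -> f x1 = Some y -> f x2 = Some y -> x1 = x2.
  by move=> x1 x2 y x1s x2s; apply: inj; rewrite in_cons ?x1s ?x2s orbT.
case fz: (f z) => [y|] /=; last exact: IH.
rewrite IH // andbT mem_pmap; apply/mapP => -[z' z's fz'].
by move: zs; rewrite (inj z z' y) ?mem_head ?in_cons ?z's ?orbT.
Qed.

Lemma uniq_cat_notin (T : eqType) (s1 s2 : seq T) z :
  uniq (s1 ++ s2) -> z \in s1 -> z \notin s2.
Proof.
rewrite cat_uniq => /and3P[_ /hasPn dis _] zs1; apply/negP => /dis.
by rewrite zs1.
Qed.

Inductive ctx (A : Type) :=
| Hole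
| CtxL of A & ctx A & btree A
| CtxR of A & btree A & ctx A.
Arguments Hole {A}.

Section Zipper.
Variable A : eqType.
Implicit Types (t u : btree A) (C : ctx A).

Fixpoint plug C u : btree A :=
  match C with
  | Hole => u
  | CtxL a C' t => Node a (plug C' u) t
  | CtxR a t C' => Node a t (plug C' u)
  end.

Fixpoint cnodes C : seq A :=
  match C with
  | Hole => [::]
  | CtxL a C' t => a :: cnodes C' ++ nodes t
  | CtxR a t C' => a :: nodes t ++ cnodes C'
  end.

Fixpoint cleaves C : seq A :=
  match C with
  | Hole => [::]
  | CtxL _ C' t => cleaves C' ++ leaves t
  | CtxR _ t C' => leaves t ++ cleaves C'
  end.

Lemma nodes_plug C u : perm_eq (nodes (plug C u)) (cnodes C ++ nodes u).
Proof.
elim: C => [|a C IH t|a t C IH] //=; rewrite perm_cons.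
  by rewrite (perm_catr _ IH) perm_catAC -catA.
by rewrite -catA perm_cat2l.
Qed.

Lemma leaves_plug C u : perm_eq (leaves (plug C u)) (cleaves C ++ leaves u).
Proof.
elim: C => [|a C IH t|a t C IH] //=.
  by rewrite (perm_catr _ IH) perm_catAC -catA.
by rewrite -catA perm_cat2l.
Qed.

Lemma perm_nodes t : perm_eq (nodes t) (inner t ++ leaves t).
Proof.
elim: t => [//|a l IHl r IHr] /=; rewrite perm_cons.
by rewrite (perm_catr _ IHl) (perm_catl _ IHr) perm_catACA.
Qed.

Lemma mem_nodes t z : (z \in nodes t) = (z \in inner t) || (z \in leaves t).
Proof. by rewrite (perm_mem (perm_nodes t)) mem_cat. Qed.

Lemma uniq_nodes t : uniq (nodes t) -> uniq (inner t) && uniq (leaves t).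
Proof. by rewrite (perm_uniq (perm_nodes t)) cat_uniq => /and3P[-> _ ->]. Qed.

Lemma plug_inner t x : x \in inner t -> exists C l r, t = plug C (Node x l r).
Proof.
elim: t => [|a l IHl r IHr] //=; rewrite in_cons mem_cat.
case/or3P => [/eqP->|/IHl[C [l' [r' ->]]]|/IHr[C [l' [r' ->]]]].
- by exists Hole, l, r.
- by exists (CtxL a C r), l', r'.
- by exists (CtxR a l C), l', r'.
Qed.

Lemma plug_leaf t y : y \in leaves t -> exists C, t = plug C (Leaf y).
Proof.
elim: t => [a|a l IHl r IHr] /=.
  by rewrite inE => /eqP->; exists Hole.
by rewrite mem_cat => /orP[/IHl[C ->]|/IHr[C ->]]; [exists (CtxL a C r)|exists (CtxR a l C)].
Qed.

Lemma kids_inner t z : (kids t z != None) = (z \in inner t).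
Proof.
elim: t => [//|a l IHl r IHr] /=; rewrite in_cons mem_cat -IHl -IHr [z == a]eq_sym.
by case: (a == z) => //=; case: (kids l z).
Qed.

Lemma kids_notin t z : z \notin nodes t -> kids t z = None.
Proof. by rewrite mem_nodes negb_or -kids_inner negbK => /andP[/eqP]. Qed.

Lemma kids_plug_ctx C u z : z \notin cnodes C -> kids (plug C u) z = kids u z.
Proof.
elim: C => [//|a C IH t|a t C IH] /=;
  rewrite in_cons mem_cat eq_sym => /norP[/negbTE-> /norP[zC zt]]; rewrite IH //.
  by case: (kids u z) => //; rewrite kids_notin.
by rewrite kids_notin.
Qed.

Lemma kids_subtree C u z :
  uniq (nodes (plug C u)) -> z \in nodes u -> kids (plug C u) z = kids u z.
Proof.
rewrite (perm_uniq (nodes_plug C u)) uniq_catC => uCu zu.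
by rewrite kids_plug_ctx // (uniq_cat_notin uCu zu).
Qed.

Lemma restr_plug keep C u u' :
  restr keep u = restr keep u' -> restr keep (plug C u) = restr keep (plug C u').
Proof. by move=> eq_u; elim: C => [|a C IH t|a t C IH] //=; rewrite IH. Qed.

Lemma restr_plug_Some keep C u u' : restr keep u = Some u' ->
  exists2 g, restr keep (plug C u) = Some g & {subset nodes u' <= nodes g}.
Proof.
move=> ru; elim: C => [|a C [g IH sub_g] t|a t C [g IH sub_g]] /=; first by exists u'.
  rewrite IH; case: (restr keep t) => [t'|]; last by exists g.
  by exists (Node a g t') => // z /sub_g zg; rewrite /= in_cons mem_cat zg orbT.
rewrite IH; case: (restr keep t) => [t'|]; last by exists g.
by exists (Node a t' g) => // z /sub_g zg; rewrite /= in_cons mem_cat zg !orbT.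
Qed.

Lemma leaves_restr keep t :
  filter keep (leaves t) = if restr keep t is Some g then leaves g else [::].
Proof.
elim: t => [a|a l IHl r IHr] /=; first by case: (keep a).
rewrite filter_cat IHl IHr.
by case: (restr keep l) => [l'|]; case: (restr keep r) => [r'|] //=; rewrite cats0.
Qed.

Section Labels.
Variables (B : eqType) (rho : A -> B).

(* The species of the children of [z]: all that conditions (D) and (S) look at. *)
Definition kidsR t z := omap (fun p : A * A => (rho p.1, rho p.2)) (kids t z).

Lemma kidsR_plug_ctx C u u' z :
  z \notin nodes u -> z \notin nodes u' -> rho (label u) = rho (label u') ->
  kidsR (plug C u) z = kidsR (plug C u') z.
Proof.
move=> zu zu' eq_rho; elim: C => [|a C IH t|a t C IH].
- by rewrite /kidsR !kids_notin.
- rewrite /kidsR /=; case: (a == z); first by case: C {IH} => /= [|*|*]; rewrite ?eq_rho.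
  by move: IH; rewrite /kidsR; case: (kids (plug C u) z); case: (kids (plug C u') z).
- rewrite /kidsR /=; case: (a == z); first by case: C {IH} => /= [|*|*]; rewrite ?eq_rho.
  by case: (kids t z) => //; apply: IH.
Qed.

Definition valid_surgery (keep : pred A) (r : A) (t t2 : btree A) : Prop :=
  [/\ uniq (r :: nodes t2), {subset leaves t2 <= leaves t},
      {in inner t2, kidsR t2 =1 kidsR t} & restr keep t2 = restr keep t].

Lemma inner_surgery keep r t t2 :
  valid_surgery keep r t t2 -> {subset inner t2 <= inner t}.
Proof.
case=> _ _ agree _ z zt2; have := agree z zt2.
by rewrite -!kids_inner in zt2 *; rewrite /kidsR; case: (kids t2 z) zt2 => //; case: (kids t z).
Qed.

Lemma nodes_surgery keep r t t2 :
  valid_surgery keep r t t2 -> {subset nodes t2 <= nodes t}.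
Proof.
move=> surg z; rewrite !mem_nodes => /orP[/(inner_surgery surg)->//|zl].
by case: surg => _ sub_l _ _; rewrite sub_l ?orbT.
Qed.

End Labels.
End Zipper.

Section Collapse.
Variables (A B : eqType) (rho : A -> B) (keep : pred A) (r x : A).
Variables (C : ctx A) (u k o : btree A).
Hypotheses (u_split : u = Node x k o \/ u = Node x o k)
  (wf : uniq (r :: nodes (plug C u)))
  (rho_k : rho (label k) = rho x) (rho_o : rho (label o) = rho x)
  (restr_o : restr keep o = None).
Let t := plug C u.
Let t1 := plug C k.

Lemma nodes_split : perm_eq (nodes u) (x :: nodes k ++ nodes o).
Proof. by case: u_split => ->; rewrite //= perm_cons perm_catC. Qed.

Lemma leaves_split : perm_eq (leaves u) (leaves k ++ leaves o).
Proof. by case: u_split => ->; rewrite //= perm_catC. Qed.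

Lemma uniq_t : uniq (nodes t).
Proof. by case/andP: wf. Qed.

Lemma uniq_split : uniq (nodes u).
Proof. by move: uniq_t; rewrite (perm_uniq (nodes_plug C u)) cat_uniq => /and3P[]. Qed.

Lemma kids_split_k z : z \in nodes k -> kids u z = kids k z.
Proof.
have uu := uniq_split; case: u_split uu => -> uu zk.
  by rewrite -[Node x k o]/(plug (CtxL x Hole o) k) kids_subtree.
by rewrite -[Node x o k]/(plug (CtxR x o Hole) k) kids_subtree.
Qed.

Lemma kids_split_o z : z \in nodes o -> kids u z = kids o z.
Proof.
have uu := uniq_split; case: u_split uu => -> uu zo.
  by rewrite -[Node x k o]/(plug (CtxR x k Hole) o) kids_subtree.
by rewrite -[Node x o k]/(plug (CtxL x Hole k) o) kids_subtree.
Qed.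

Lemma nodes_collapse : perm_eq (nodes t) (x :: nodes t1 ++ nodes o).
Proof.
apply/permP => p; rewrite /= !count_cat (permP (nodes_plug C u)) (permP (nodes_plug C k)).
by rewrite !count_cat (permP nodes_split) /= count_cat; lia.
Qed.

Lemma leaves_collapse : perm_eq (leaves t) (leaves t1 ++ leaves o).
Proof.
apply/permP => p; rewrite !count_cat (permP (leaves_plug C u)) (permP (leaves_plug C k)).
by rewrite !count_cat (permP leaves_split) count_cat; lia.
Qed.

Lemma uniq_collapse : uniq (r :: x :: nodes t1 ++ nodes o).
Proof. by move: wf; rewrite !cons_uniq (perm_uniq nodes_collapse) (perm_mem nodes_collapse). Qed.

Lemma uniq_collapse_t1 : uniq (r :: nodes t1).
Proof.
apply: subseq_uniq uniq_collapse; rewrite /= eqxx.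
exact: subseq_trans (prefix_subseq _ (nodes o)) (subseq_cons _ x).
Qed.

Lemma kidsR_collapse : {in nodes t1, kidsR rho t1 =1 kidsR rho t}.
Proof.
have ut : uniq (cnodes C ++ nodes u) by rewrite -(perm_uniq (nodes_plug C u)) uniq_t.
have ut1 : uniq (nodes t1) by move: uniq_collapse_t1; rewrite cons_uniq => /andP[].
move=> z; rewrite (perm_mem (nodes_plug C k)) mem_cat => /orP[zC|zk].
  have zu := uniq_cat_notin ut zC.
  have zk : z \notin nodes k.
    by apply: contra zu; rewrite (perm_mem nodes_split) in_cons mem_cat => ->; rewrite orbT.
  by apply: kidsR_plug_ctx => //; case: u_split => ->.
have zu : z \in nodes u by rewrite (perm_mem nodes_split) in_cons mem_cat zk orbT.
by rewrite /kidsR /t1 kids_subtree // kids_subtree ?kids_split_k ?uniq_t.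
Qed.

Lemma x_notin_collapse : x \notin nodes t1.
Proof. by case/andP: uniq_collapse => _ /andP[]; rewrite mem_cat negb_or => /andP[-> _]. Qed.

Lemma collapse_surgery : valid_surgery rho keep r t t1.
Proof.
split.
- exact: uniq_collapse_t1.
- by move=> z zt1; rewrite (perm_mem leaves_collapse) mem_cat zt1.
- by move=> z zi; apply: kidsR_collapse; rewrite mem_nodes zi.
- by apply: restr_plug; case: u_split => -> /=; rewrite restr_o; case: (restr keep k).
Qed.

Section Graft.
Variables (y : A) (C2 : ctx A).
Hypotheses (t1_split : t1 = plug C2 (Leaf y)) (rho_y : rho y = rho x).
Let t2 := plug C2 o.

Lemma nodes_graft : perm_eq (nodes t) (x :: y :: nodes t2).
Proof.
apply/permP => p; rewrite (permP nodes_collapse) /= count_cat t1_split.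
by rewrite (permP (nodes_plug C2 (Leaf y))) (permP (nodes_plug C2 o)) !count_cat /=; lia.
Qed.

Lemma leaves_graft : perm_eq (leaves t) (y :: leaves t2).
Proof.
apply/permP => p; rewrite (permP leaves_collapse) /= count_cat t1_split.
by rewrite (permP (leaves_plug C2 (Leaf y))) (permP (leaves_plug C2 o)) !count_cat /=; lia.
Qed.

Lemma uniq_graft : uniq (r :: x :: y :: nodes t2).
Proof. by move: wf; rewrite !cons_uniq (perm_uniq nodes_graft) (perm_mem nodes_graft). Qed.

Lemma x_notin_graft : x \notin nodes t2.
Proof. by case/andP: uniq_graft => _ /andP[]; rewrite in_cons negb_or => /andP[_ ->]. Qed.

Lemma y_notin_graft : y \notin leaves t2.
Proof.
case/andP: uniq_graft => _ /andP[_ /andP[]].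
by rewrite mem_nodes negb_or => /andP[_ ->].
Qed.

Lemma kidsR_graft : {in nodes t2, kidsR rho t2 =1 kidsR rho t}.
Proof.
have ut2 : uniq (nodes t2) by case/andP: uniq_graft => _ /andP[_ /andP[]].
move=> z; rewrite (perm_mem (nodes_plug C2 o)) mem_cat => /orP[zC|zo].
  have ut1 : uniq (cnodes C2 ++ nodes (Leaf y)).
    by rewrite -(perm_uniq (nodes_plug C2 _)) -t1_split; case/andP: uniq_collapse_t1.
  have zt1 : z \in nodes t1 by rewrite t1_split (perm_mem (nodes_plug C2 _)) mem_cat zC.
  rewrite -kidsR_collapse // t1_split.
  apply: kidsR_plug_ctx; [|exact: uniq_cat_notin ut1 zC|by rewrite rho_o rho_y].
  by apply: uniq_cat_notin zC; rewrite -(perm_uniq (nodes_plug C2 o)).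
have zu : z \in nodes u by rewrite (perm_mem nodes_split) in_cons mem_cat zo !orbT.
by rewrite /kidsR /t2 !kids_subtree ?kids_split_o ?uniq_t.
Qed.

Lemma graft_surgery : keep y = false -> valid_surgery rho keep r t t2.
Proof.
move=> keep_y; split.
- apply: subseq_uniq uniq_graft; rewrite /= eqxx.
  exact: subseq_trans (subseq_cons _ y) (subseq_cons _ x).
- by move=> z zt2; rewrite (perm_mem leaves_graft) in_cons zt2 orbT.
- by move=> z zi; apply: kidsR_graft; rewrite mem_nodes zi.
- have -> : restr keep t2 = restr keep t1.
    by rewrite t1_split; apply: restr_plug; rewrite /= keep_y restr_o.
  by case: collapse_surgery.
Qed.

End Graft.
End Collapse.

Section Reconciliation.
Variables (B : eqType) (G : ptree nat) (S : ptree B) (phi rho : nat -> B).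
Implicit Types (T : ptree nat) (delta : nat -> option nat).

Definition restrict_delta (L : seq nat) delta (z : nat) : option nat :=
  if delta z is Some y then (if y \in L then Some y else None) else None.

Lemma uniq_Dup T : wf_tree T -> uniq (Dup T rho).
Proof. by rewrite /wf_tree cons_uniq => /andP[_ /uniq_nodes/andP[ui _]]; apply: filter_uniq. Qed.

Lemma uniq_Loss T : wf_tree T -> uniq (Loss G T).
Proof. by rewrite /wf_tree cons_uniq => /andP[_ /uniq_nodes/andP[_ ul]]; apply: filter_uniq. Qed.

Lemma cost_eq (G' : ptree nat) delta : is_reconciliation G G' S phi rho delta ->
  cost G G' rho delta + size (Dup' G' rho delta) = size (Loss G G') + size (Dup G' rho).
Proof.
case=> [[wf _] [_ [_ [delta_loss delta_inj]]]].
set L := Loss G G'; set D := Dup G' rho; set D' := Dup' G' rho delta.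
set L' := Loss' G' rho delta.
have uD := uniq_Dup wf; have uL := uniq_Loss wf.
have uD' : uniq D' := filter_uniq _ uD.
have sub_D' : {subset D' <= D} by move=> z; rewrite mem_filter => /andP[].
have uL' : uniq L'.
  by apply: uniq_pmap_in => // z1 z2 y /sub_D' D1 /sub_D' D2; apply: delta_inj.
have sub_L' : {subset L' <= L}.
  move=> y; rewrite mem_pmap => /mapP[z /sub_D' zD yz].
  by case: (delta_loss z y zD (esym yz)).
have size_L' : size L' = size D'.
  rewrite size_pmap -count_predT; apply: eq_in_count => z.
  by rewrite mem_filter => /andP[]; case: (delta z).
have size_L := size_uniq_sub uL uL' sub_L'.
have size_D : count (fun x => delta x == None) D + size D' = size D.
  by rewrite size_filter count_predC.
rewrite /cost -/L -/D -/D' -/L'.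
have -> : count (fun y => y \notin L') L = count (predC (mem L')) L by apply: eq_count.
rewrite size_L size_L' -size_D -/L; lia.
Qed.

Lemma Loss_unkept (G' : ptree nat) keep y :
  restrP keep G' = Some G -> y \in Loss G G' -> keep y = false.
Proof.
rewrite /restrP mem_filter /leavesP; case E: (restr keep (pbody G')) => [g|] // [<-] /=.
have := leaves_restr keep (pbody G'); rewrite E => <- /andP[yG yG'].
by apply/negbTE; apply: contra yG => ky; rewrite mem_filter ky.
Qed.

Lemma is_dupE T z : is_dup T rho z =
  if kidsR rho (pbody T) z is Some (a, b) then (rho z == a) && (rho z == b) else false.
Proof. by rewrite /is_dup /kidsR /kidsP; case: (kids (pbody T) z) => [[]|]. Qed.

Lemma is_specE T z : is_spec T S rho z =
  if kidsR rho (pbody T) z is Some (a, b) then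
    (if kidsP S (rho z) is Some (sl, sr) then (sl == a) && (sr == b) else false)
  else false.
Proof. by rewrite /is_spec /kidsR /kidsP; case: (kids (pbody T) z) => [[]|]. Qed.

Lemma cost_restrict_lt (G1 G2 : ptree nat) delta x :
  let delta2 := restrict_delta (Loss G G2) delta in
  is_reconciliation G G1 S phi rho delta -> is_reconciliation G G2 S phi rho delta2 ->
  {subset Dup G2 rho <= Dup G1 rho} -> {subset Loss G G2 <= Loss G G1} ->
  x \in Dup G1 rho -> x \notin Dup G2 rho -> delta2 x = None ->
  cost G G2 rho delta2 < cost G G1 rho delta.
Proof.
move=> delta2 rec1 rec2 sub_D sub_L xD1 xD2 x_lost.
have cost1 := cost_eq rec1; have cost2 := cost_eq rec2.
case: rec1 => [[wf1 _] [_ [_ [delta_loss delta_inj]]]]; case: rec2 => [[wf2 _] _].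
have uD1 := uniq_Dup wf1; have uD2 := uniq_Dup wf2.
pose kept z := delta2 z != None.
pose lost := predI (fun z => delta z != None) (predC kept).
have size_D : size (Dup G1 rho) =
    size (Dup G2 rho) + count (predC (mem (Dup G2 rho))) (Dup G1 rho).
  exact: size_uniq_sub.
have size_L : size (Loss G G1) =
    size (Loss G G2) + count (predC (mem (Loss G G2))) (Loss G G1).
  exact: size_uniq_sub (uniq_Loss wf1) (uniq_Loss wf2) sub_L.
have kept_D : count kept (Dup G1 rho) = count kept (Dup G2 rho) +
    count (predI kept (predC (mem (Dup G2 rho)))) (Dup G1 rho).
  exact: count_uniq_sub.
have size_P1 : size (Dup' G1 rho delta) = count kept (Dup G1 rho) + count lost (Dup G1 rho).
  rewrite size_filter (count_predI_split _ kept); congr (_ + _); apply: eq_count => z /=.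
  by rewrite /kept /delta2 /restrict_delta; case: (delta z) => [y|] //; case: ifP.
have size_P2 : size (Dup' G2 rho delta2) = count kept (Dup G2 rho) by rewrite size_filter.
have x_new : count (predI kept (predC (mem (Dup G2 rho)))) (Dup G1 rho) <
             count (predC (mem (Dup G2 rho))) (Dup G1 rho).
  by apply: (count_lt_sub _ xD1) => //= [z /andP[] // | ]; rewrite /kept x_lost.
have lost_L : count lost (Dup G1 rho) <= count (predC (mem (Loss G G2))) (Loss G G1).
  have <- : size (pmap delta (filter lost (Dup G1 rho))) = count lost (Dup G1 rho).
    rewrite size_pmap count_filter; apply: eq_count => z /=.
    by case: (delta z).
  rewrite -size_filter; apply: uniq_leq_size.
    apply: uniq_pmap_in; first exact: filter_uniq.
    move=> z1 z2 y; rewrite mem_filter => /andP[_ D1]; rewrite mem_filter => /andP[_ D2].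
    exact: delta_inj.
  move=> y; rewrite mem_pmap => /mapP[z zs yz]; move: zs; rewrite (mem_filter lost) => /andP[lz zD].
  have [yL _] := delta_loss z y zD (esym yz).
  move: lz; rewrite mem_filter yL andbT /= /kept /delta2 /restrict_delta -yz /=.
  by case: (y \in Loss G G2).
lia.
Qed.

Section Surgery.
Variables (G' : ptree nat) (delta : nat -> option nat) (keep : pred nat) (t2 : btree nat).
Hypotheses (rec : is_reconciliation G G' S phi rho delta) (G'_restr : restrP keep G' = Some G).
Hypothesis surgery : valid_surgery rho keep (proot G') (pbody G') t2.
Let G2 := Planted (proot G') t2.

Lemma is_dup_surgery z : z \in inner t2 -> is_dup G2 rho z = is_dup G' rho z.
Proof. by case: surgery => _ _ agree _ zt2; rewrite !is_dupE /= agree. Qed.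

Lemma is_spec_surgery z : z \in inner t2 -> is_spec G2 S rho z = is_spec G' S rho z.
Proof. by case: surgery => _ _ agree _ zt2; rewrite !is_specE /= agree. Qed.

Lemma Dup_surgery : {subset Dup G2 rho <= Dup G' rho}.
Proof.
move=> z; rewrite !mem_filter => /andP[dz zt2].
by rewrite -is_dup_surgery // dz (inner_surgery surgery).
Qed.

Lemma Loss_surgery : {subset Loss G G2 <= Loss G G'}.
Proof.
case: surgery => _ sub_l _ _ z; rewrite !mem_filter => /andP[-> /sub_l].
by rewrite /leavesP => ->.
Qed.

Lemma reconciliation_surgery :
  is_reconciliation G G2 S phi rho (restrict_delta (Loss G G2) delta).
Proof.
case: rec => [_ [[rho_root [rho_nodes rho_inner]] [rho_leaves [delta_loss delta_inj]]]].
case: (surgery) => wf2 _ _ restr2.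
split; [split=> //; exists keep|split; [split=> //; split|split=> //; split]].
- by move: G'_restr; rewrite /restrP /= restr2.
- move=> z; rewrite /nodesP /= in_cons => /orP[/eqP->|/(nodes_surgery surgery) zt].
    by apply: rho_nodes; rewrite mem_head.
  by apply: rho_nodes; rewrite /nodesP in_cons zt orbT.
- move=> z zt2; rewrite is_dup_surgery // is_spec_surgery //.
  exact/rho_inner/(inner_surgery surgery).
- rewrite /restrict_delta => z y /Dup_surgery zD.
  case dz: (delta z) => [y'|] //; case: ifP => // yL [<-].
  by have [] := delta_loss z y' zD dz.
- rewrite /restrict_delta => z1 z2 y /Dup_surgery D1 /Dup_surgery D2.
  case d1: (delta z1) => [y1|] //; case: ifP => // _ [<-].
  case d2: (delta z2) => [y2|] //; case: ifP => // _ [e2].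
  by apply: (delta_inj z1 z2 y1) => //; rewrite d2 e2.
Qed.

Lemma surgery_cheaper x : x \in Dup G' rho -> x \notin nodes t2 ->
  (forall y, delta x = Some y -> y \notin leaves t2) ->
  cost G G2 rho (restrict_delta (Loss G G2) delta) < cost G G' rho delta.
Proof.
move=> xD xt2 yt2; apply: (cost_restrict_lt rec reconciliation_surgery Dup_surgery Loss_surgery xD).
  by rewrite mem_filter negb_and; apply/orP; right; apply: contra xt2; rewrite mem_nodes => ->.
rewrite /restrict_delta; case dx: (delta x) => [y|] //.
by rewrite mem_filter (negbTE (yt2 y dx)) andbF.
Qed.

End Surgery.
End Reconciliation.

Lemma optimal_dup_pruned_child (B : eqType) (G G' : ptree nat) (S : ptree B)
    (phi rho : nat -> B) (delta : nat -> option nat) (keep : pred nat)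
    (C : ctx nat) (x : nat) (k o u : btree nat) :
  optimal G G' S phi rho delta -> restrP keep G' = Some G ->
  pbody G' = plug C u -> u = Node x k o \/ u = Node x o k ->
  x \in Dup G' rho -> restr keep o = None -> False.
Proof.
move=> [rec opt] G'_restr Et u_split xD restr_o.
have [[wf _] [_ [_ [delta_loss _]]]] := rec.
have wfu : uniq (proot G' :: nodes (plug C u)) by rewrite -Et.
have [rho_k rho_o] : rho (label k) = rho x /\ rho (label o) = rho x.
  have xu : x \in nodes u by case: u_split => ->; rewrite mem_head.
  have uu : uniq (nodes (plug C u)) by move: wfu; rewrite cons_uniq => /andP[].
  move: xD; rewrite mem_filter /is_dup /kidsP Et kids_subtree //.
  by case: u_split => -> /=; rewrite eqxx => /andP[/andP[/eqP<- /eqP<-]].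
have cheaper t2 : valid_surgery rho keep (proot G') (pbody G') t2 -> x \notin nodes t2 ->
    (forall y, delta x = Some y -> y \notin leaves t2) -> False.
  move=> surg xt2 yt2; have := opt _ _ _ (reconciliation_surgery rec G'_restr surg).
  by rewrite leqNgt (surgery_cheaper rec G'_restr surg xD xt2 yt2).
rewrite Et in cheaper.
have collapse := collapse_surgery u_split wfu rho_k restr_o.
have x_t1 := x_notin_collapse u_split wfu.
case dx: (delta x) => [y|]; last by apply: (cheaper _ collapse x_t1) => y; rewrite dx.
have [yL rho_y] := delta_loss x y xD dx.
case yt1: (y \in leaves (plug C k)); last first.
  by apply: (cheaper _ collapse x_t1) => y'; rewrite dx => -[<-]; rewrite yt1.
have [C2 t1_split] := plug_leaf yt1.
apply: (cheaper (plug C2 o)).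
- apply: (graft_surgery u_split wfu rho_k rho_o restr_o t1_split (esym rho_y)).
  exact: Loss_unkept G'_restr yL.
- exact (x_notin_graft u_split wfu t1_split).
- by move=> y'; rewrite dx => -[<-]; exact (y_notin_graft u_split wfu t1_split).
Qed.

Theorem lemma12 (B : eqType) (G G' : ptree nat) (S : ptree B) (phi : nat -> B)
    (rho : nat -> B) (delta : nat -> option nat) :
  wf_tree G -> wf_tree S ->
  (forall x, x \in leavesP G -> phi x \in leavesP S) ->
  optimal G G' S phi rho delta ->
  forall x, x \in Dup G' rho -> x \in nodesP G.
Proof.
move=> _ _ _ opt x xD; apply/negPn/negP => xG.
have [[[_ [keep G'_restr]] _] _] := opt.
have [C [l [r Et]]] : exists C l r, pbody G' = plug C (Node x l r).
  by apply: plug_inner; move: xD; rewrite mem_filter => /andP[].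
case rl: (restr keep l) => [l'|].
  case rr: (restr keep r) => [r'|]; last first.
    by apply: (optimal_dup_pruned_child opt G'_restr Et _ xD rr); left.
  have restr_x : restr keep (Node x l r) = Some (Node x l' r') by rewrite /= rl rr.
  have [g restr_G' sub_g] := restr_plug_Some C restr_x.
  move: G'_restr xG; rewrite /restrP Et restr_G' => -[<-].
  by rewrite /nodesP in_cons sub_g ?orbT ?mem_head.
by apply: (optimal_dup_pruned_child opt G'_restr Et _ xD rl); right.
Qed.
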